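(* Let $E$ be a Banach space and $P$ a metric space. For $\mu\in P$ and $\lambda>0$ let $\{R^{(\mu,\lambda)}(t,s)\}_{t\geq s\geq0}$ be evolution systems on $E$ such that (H4) there are $M\geq1$, $\omega\in\mathbb{R}$ with $\|R^{(\mu,\lambda)}(t,s)\|\leq Me^{\omega(t-s)}$ for all $\mu,\lambda$ and $0\leq s\leq t$; and (H5) there are $C_0$ semigroups $\{\widehat S^{(\mu)}(t)\}_{t\geq0}$, $\mu\in P$, on $E$ such that for any $t\geq0$, $s\in[0,t]$, $\mu\in P$, $\bar u\in E$, $\lim_{\lambda\to0^+,\ \bar v\to\bar u,\ \nu\to\mu}R^{(\nu,\lambda)}(t,s)\bar v=\widehat S^{(\mu)}(t-s)\bar u$, uniformly for $t,s$ from bounded intervals. Let $(T_n)$ in $(0,+\infty)$, $(k_n)$ positive integers, $(\lambda_n)$ in $(0,+\infty)$, $(\mu_n)$ in $P$ be such that $T_n\to+\infty$, $k_n\to\infty$, $\lambda_n\to0$, $k_n\lambda_nT_n\to t$ for some $t>0$, $\mu_n\to\mu_0\in P$, and $k_n\lambda_nT_n\leq t$ for almost all $n$. Then for any continuous $w:[0,t]\to E$, $\lambda_nT_n\sum_{k=0}^{k_n-1}R^{(\mu_n,\lambda_n)}(k_n\lambda_nT_n,k\lambda_nT_n)w(k\lambda_nT_n)\to\int_0^t\widehat S^{(\mu_0)}(t-s)w(s)\,ds$ as $n\to+\infty$.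
   Context: An evolution system on $E$ is a family $\{R(t,s)\}_{t\geq s\geq 0}$ of bounded linear operators with $R(t,t)=I$, $R(t,s)R(s,r)=R(t,r)$ for $t\geq s\geq r\geq 0$, and $(s,t)\mapsto R(t,s)\bar u$ continuous for each $\bar u\in E$. *)

From Stdlib Require Import Reals Lra.
From Coquelicot Require Import Coquelicot.
Open Scope R_scope.

Definition is_metric {P : Type} (d : P -> P -> R) : Prop :=
  (forall x y, 0 <= d x y) /\
  (forall x y, d x y = 0 <-> x = y) /\
  (forall x y, d x y = d y x) /\
  (forall x y z, d x z <= d x y + d y z).

Section Ops.
Context {E : NormedModule R_AbsRing}.

Definition bounded_linear (A : E -> E) : Prop :=
  (forall x y, A (plus x y) = plus (A x) (A y)) /\
  (forall (a : R) x, A (scal a x) = scal a (A x)) /\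
  (exists C : R, forall x, norm (A x) <= C * norm x).

Definition is_evolution_system (Rf : R -> R -> E -> E) : Prop :=
  (forall t s, 0 <= s <= t -> bounded_linear (Rf t s)) /\
  (forall t, 0 <= t -> forall u, Rf t t u = u) /\
  (forall t s r, 0 <= r <= s -> s <= t -> forall u, Rf t s (Rf s r u) = Rf t r u) /\
  (forall u t s, 0 <= s <= t -> forall eps, 0 < eps -> exists delta, 0 < delta /\
     forall t' s', 0 <= s' <= t' -> Rabs (t' - t) < delta -> Rabs (s' - s) < delta ->
       norm (minus (Rf t' s' u) (Rf t s u)) < eps).

Definition is_C0_semigroup (S : R -> E -> E) : Prop :=
  (forall t, 0 <= t -> bounded_linear (S t)) /\
  (forall u, S 0 u = u) /\
  (forall t s, 0 <= t -> 0 <= s -> forall u, S (t + s) u = S t (S s u)) /\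
  (forall u eps, 0 < eps -> exists delta, 0 < delta /\
     forall h, 0 <= h < delta -> norm (minus (S h u) u) < eps).

Definition continuous_on_Icc (w : R -> E) (a b : R) : Prop :=
  forall s, a <= s <= b -> forall eps, 0 < eps -> exists delta, 0 < delta /\
    forall s', a <= s' <= b -> Rabs (s' - s) < delta -> norm (minus (w s') (w s)) < eps.
End Ops.

From Stdlib Require Import Reals Lra Lia Classical ClassicalEpsilon.
From Coquelicot Require Import Coquelicot.
Open Scope R_scope.

(* Write h_n = λ_n T_n for the mesh and t_n = k_n h_n for the last time of the grid
   s_j = j h_n.  The sum is carried to the integral in three steps, each uniform in j:
   - R^{(μ_n,λ_n)}(t_n, s_j) w(s_j) is close to Ŝ(t_n - s_j) w(s_j) by (H5), uniformly
     along the compact trajectory w([0,t]) because the limit operators are equi-Lipschitz,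
     with the constant M e^{|ω t|} inherited from (H4) in the limit;
   - Ŝ(t - s_j) = Ŝ(t_n - s_j) Ŝ(t - t_n), and Ŝ(t - t_n) → I uniformly on the trajectory;
   - what is left is a Riemann sum of the continuous integrand s ↦ Ŝ(t - s) w(s) over
     [0, t_n], with mesh h_n ≤ t / k_n → 0 and t_n → t. *)

Lemma minus_plus_plus {G : AbelianGroup} (a b c d : G) :
  minus (plus a b) (plus c d) = plus (minus a c) (minus b d).
Proof.
  unfold minus. rewrite opp_plus, <- !plus_assoc. f_equal.
  rewrite !plus_assoc. f_equal. apply plus_comm.
Qed.

Section NormFacts.
Context {E : NormedModule R_AbsRing}.

Lemma norm_minus_triangle (a b c : E) :
  norm (minus a c) <= norm (minus a b) + norm (minus b c).
Proof. rewrite (minus_trans b). apply norm_triangle. Qed.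

Lemma norm_minus_sym (a b : E) : norm (minus a b) = norm (minus b a).
Proof. rewrite <- opp_minus. apply norm_opp. Qed.

Lemma norm_scal_nonneg (c : R) (x : E) : 0 <= c -> norm (scal c x) <= c * norm x.
Proof.
  intros Hc. eapply Rle_trans; [apply (norm_scal (K := R_AbsRing)) |].
  unfold abs; simpl. rewrite Rabs_pos_eq by exact Hc. lra.
Qed.

Lemma norm_sum_n_minus_le (e : R) (a b : nat -> E) (m : nat) :
  (forall j, (j <= m)%nat -> norm (minus (a j) (b j)) <= e) ->
  norm (minus (sum_n a m) (sum_n b m)) <= INR (S m) * e.
Proof.
  induction m as [|m IH]; intros Hab.
  - rewrite !sum_O, Rmult_1_l. exact (Hab O (le_n O)).
  - rewrite !sum_Sn, (@minus_plus_plus (NormedModule.AbelianGroup _ E)), S_INR.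
    eapply Rle_trans; [apply norm_triangle |].
    assert (IHm := IH (fun j Hj => Hab j (le_S _ _ Hj))).
    specialize (Hab (S m) (le_n _)). lra.
Qed.

Lemma norm_scal_sum_n_minus_le (c e : R) (a b : nat -> E) (m : nat) : 0 <= c ->
  (forall j, (j <= m)%nat -> norm (minus (a j) (b j)) <= e) ->
  norm (minus (scal c (sum_n a m)) (scal c (sum_n b m))) <= c * (INR (S m) * e).
Proof.
  intros Hc Hab. rewrite <- scal_minus_distr_l.
  eapply Rle_trans; [apply norm_scal_nonneg, Hc |].
  apply Rmult_le_compat_l; [exact Hc | exact (norm_sum_n_minus_le e a b m Hab)].
Qed.

Lemma bounded_linear_minus (A : E -> E) (x y : E) :
  bounded_linear A -> A (minus x y) = minus (A x) (A y).
Proof.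
  intros [Hadd [Hscal _]]. unfold minus. rewrite Hadd. f_equal.
  transitivity (A (scal (opp (one : R)) y)).
  - f_equal. symmetry. exact (@scal_opp_one _ (NormedModule.ModuleSpace _ E) y).
  - rewrite Hscal. exact (@scal_opp_one _ (NormedModule.ModuleSpace _ E) (A y)).
Qed.

Lemma bounded_linear_lipschitz (A : E -> E) (K : R) (x y : E) : bounded_linear A ->
  (forall u, norm (A u) <= K * norm u) -> norm (minus (A x) (A y)) <= K * norm (minus x y).
Proof. intros HA HK. rewrite <- bounded_linear_minus by exact HA. apply HK. Qed.

End NormFacts.

Definition eventually_close {E : NormedModule R_AbsRing} (a b : nat -> E) : Prop :=
  forall eps, 0 < eps -> eventually (fun n => norm (minus (a n) (b n)) < eps).

Lemma eventually_close_trans {E : NormedModule R_AbsRing} (a b c : nat -> E) :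
  eventually_close a b -> eventually_close b c -> eventually_close a c.
Proof.
  intros Hab Hbc eps Heps.
  generalize (filter_and (F := eventually) _ _
    (Hab (eps / 2) ltac:(lra)) (Hbc (eps / 2) ltac:(lra))).
  apply filter_imp. intros n [H1 H2].
  pose proof (norm_minus_triangle (a n) (b n) (c n)). lra.
Qed.

Lemma filterlim_eventually_close {E : NormedModule R_AbsRing} (a b : nat -> E) (l : E) :
  eventually_close a b -> filterlim b eventually (locally l) ->
  filterlim a eventually (locally l).
Proof.
  intros Hab Hb. apply filterlim_locally. intros eps.
  apply filterlim_locally with (eps := pos_div_2 eps) in Hb.
  generalize (filter_and (F := eventually) _ _ Hb (Hab (eps / 2) (is_pos_div_2 eps))).
  apply filter_imp. intros n [Hbn Habn].
  replace (pos eps) with (eps / 2 + eps / 2) by lra.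
  exact (ball_triangle _ _ _ _ _ Hbn (norm_compat1 _ _ _ Habn)).
Qed.

Lemma lebesgue_number_Icc (a b : R) (Q : R -> R -> Prop) :
  (forall y, a <= y <= b -> exists r, 0 < r /\ Q y r) ->
  exists d, 0 < d /\ forall x, a <= x <= b ->
    exists y r, a <= y <= b /\ Q y r /\ Rabs (x - y) < r /\ d <= r.
Proof.
  intros HQ.
  assert (Hrad : forall y, exists r : posreal, a <= y <= b -> Q y r).
  { intros y. destruct (classic (a <= y <= b)) as [Hy | Hy].
    - destruct (HQ y Hy) as [r [Hr Qr]]. exists (mkposreal r Hr). intros _. exact Qr.
    - exists (mkposreal 1 Rlt_0_1). intros Hy'. contradiction. }
  destruct (choice _ Hrad) as [rad Hrad'].
  destruct (compactness_value_1d a b rad) as [d Hd].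
  exists d. split; [apply cond_pos |]. intros x Hx.
  apply NNPP. intros Hno. apply (Hd x Hx). intros [y [Hy [Hxy Hdy]]].
  apply Hno. exists y, (rad y). auto.
Qed.

Definition unif_continuous {E : NormedModule R_AbsRing} (f : R -> E) : Prop :=
  forall e, 0 < e -> exists d, 0 < d /\
    forall x y, Rabs (x - y) < d -> norm (minus (f x) (f y)) < e.

(* Coquelicot's integrability criteria ask for two-sided continuity, also at the endpoints,
   so functions given on [a, b] are extended by constants outside. *)
Definition extend_Icc {E : NormedModule R_AbsRing} (f : R -> E) (a b x : R) : E :=
  f (Rmax a (Rmin x b)).

Section Compactness.
Context {E : NormedModule R_AbsRing}.

Lemma unif_continuous_on_Icc (f : R -> E) (a b : R) : continuous_on_Icc f a b ->
  forall e, 0 < e -> exists d, 0 < d /\ forall x y, a <= x <= b -> a <= y <= b ->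
    Rabs (x - y) < d -> norm (minus (f x) (f y)) < e.
Proof.
  intros Hf e He.
  destruct (lebesgue_number_Icc a b (fun y r => forall x, a <= x <= b ->
    Rabs (x - y) < 2 * r -> norm (minus (f x) (f y)) < e / 2)) as [d [Hd Hcov]].
  { intros y Hy. destruct (Hf y Hy (e / 2) ltac:(lra)) as [r [Hr Hfr]].
    exists (r / 2). split; [lra |]. intros x Hx Hxy. apply Hfr; [exact Hx | lra]. }
  exists d. split; [exact Hd |]. intros x x' Hx Hx' Hxx'.
  destruct (Hcov x Hx) as [y [r [Hy [Qr [Hxy Hdr]]]]].
  assert (Hx_y : norm (minus (f x) (f y)) < e / 2) by (apply Qr; [exact Hx | lra]).
  assert (Hx'_y : norm (minus (f x') (f y)) < e / 2).
  { apply Qr; [exact Hx' |].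
    replace (x' - y) with ((x' - x) + (x - y)) by ring.
    eapply Rle_lt_trans; [apply Rabs_triang |].
    rewrite <- Rabs_Ropp, Ropp_minus_distr. lra. }
  pose proof (norm_minus_triangle (f x) (f y) (f x')) as Htri.
  rewrite (norm_minus_sym (f y)) in Htri. lra.
Qed.

Lemma extend_Icc_id (f : R -> E) (a b x : R) : a <= x <= b -> extend_Icc f a b x = f x.
Proof.
  intros Hx. unfold extend_Icc. f_equal.
  rewrite Rmin_left, Rmax_right; lra.
Qed.

Lemma unif_continuous_extend_Icc (f : R -> E) (a b : R) : a <= b ->
  continuous_on_Icc f a b -> unif_continuous (extend_Icc f a b).
Proof.
  intros Hab Hf e He. destruct (unif_continuous_on_Icc f a b Hf e He) as [d [Hd Hfd]].
  exists d. split; [exact Hd |]. intros x y Hxy. unfold extend_Icc.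
  apply Hfd; try (unfold Rmax, Rmin; repeat destruct Rle_dec; lra).
  eapply Rle_lt_trans; [| exact Hxy].
  unfold Rmax, Rmin; repeat destruct Rle_dec; split_Rabs; lra.
Qed.

Lemma unif_continuous_continuous (f : R -> E) (z : R) :
  unif_continuous f -> continuous f z.
Proof.
  intros Hf. apply filterlim_locally. intros eps.
  destruct (Hf eps (cond_pos eps)) as [d [Hd Hfd]].
  exists (mkposreal d Hd). intros y Hy. apply norm_compat1. apply Hfd. exact Hy.
Qed.

Lemma uniform_on_continuous_image {I : Type} (near : R -> I -> Prop) (A B : I -> E -> E)
  (w : R -> E) (a b K : R) :
  continuous_on_Icc w a b -> 0 < K ->
  (forall r r' i, r <= r' -> near r i -> near r' i) ->
  (forall r i x y, near r i -> norm (minus (B i x) (B i y)) <= K * norm (minus x y)) ->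
  (forall u e, 0 < e -> exists r, 0 < r /\ forall i v, near r i ->
     norm (minus v u) < r -> norm (minus (A i v) (B i u)) < e) ->
  forall e, 0 < e -> exists r, 0 < r /\ forall i, near r i ->
    forall x, a <= x <= b -> norm (minus (A i (w x)) (B i (w x))) < e.
Proof.
  intros Hw HK Hmono HB HAB e He.
  destruct (lebesgue_number_Icc a b (fun y r => exists rho,
    (forall i v, near r i -> norm (minus v (w y)) < rho ->
       norm (minus (A i v) (B i (w y))) < e / 2) /\
    (forall x, a <= x <= b -> Rabs (x - y) < r ->
       norm (minus (w x) (w y)) < Rmin rho (e / (2 * K))))) as [d [Hd Hcov]].
  { intros y Hy. destruct (HAB (w y) (e / 2) ltac:(lra)) as [rho [Hrho Hrho']].
    assert (Htol : 0 < Rmin rho (e / (2 * K))).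
    { apply Rmin_pos; [exact Hrho | apply Rdiv_lt_0_compat; lra]. }
    destruct (Hw y Hy _ Htol) as [r [Hr Hwr]].
    exists (Rmin r rho). split; [apply Rmin_pos; assumption |]. exists rho. split.
    - intros i v Hi. apply Hrho'. apply (Hmono (Rmin r rho)); [apply Rmin_r | exact Hi].
    - intros x Hx Hxy. apply Hwr; [exact Hx |]. pose proof (Rmin_l r rho). lra. }
  exists d. split; [exact Hd |]. intros i Hi x Hx.
  destruct (Hcov x Hx) as [y [r [Hy [[rho [Hnear Hclose]] [Hxy Hdr]]]]].
  specialize (Hclose x Hx Hxy).
  pose proof (Rmin_l rho (e / (2 * K))). pose proof (Rmin_r rho (e / (2 * K))).
  assert (HA : norm (minus (A i (w x)) (B i (w y))) < e / 2).
  { apply Hnear; [exact (Hmono d r i Hdr Hi) | lra]. }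
  assert (HBi : norm (minus (B i (w y)) (B i (w x))) < e / 2).
  { eapply Rle_lt_trans; [exact (HB d i _ _ Hi) |]. rewrite norm_minus_sym.
    replace (e / 2) with (K * (e / (2 * K))) by (field; lra).
    apply Rmult_lt_compat_l; lra. }
  pose proof (norm_minus_triangle (A i (w x)) (B i (w y)) (B i (w x))). lra.
Qed.

End Compactness.

Section Integration.
Context {E : CompleteNormedModule R_AbsRing}.

Lemma RInt_rectangle_error (F : R -> E) (a h e : R) : 0 <= h -> (forall z, continuous F z) ->
  (forall x, a <= x <= a + h -> norm (minus (F x) (F a)) <= e) ->
  norm (minus (RInt F a (a + h)) (scal h (F a))) <= h * e.
Proof.
  intros Hh HF HFa.
  assert (Hex : ex_RInt F a (a + h)) by (apply ex_RInt_continuous; intros; apply HF).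
  replace (scal h (F a)) with (RInt (fun _ => F a) a (a + h))
    by (rewrite RInt_const; f_equal; ring).
  rewrite <- RInt_minus by (exact Hex || apply ex_RInt_const).
  replace (h * e) with ((a + h - a) * e) by ring.
  apply norm_RInt_le_const with (f := fun x => minus (F x) (F a)); [lra | exact HFa |].
  apply RInt_correct, ex_RInt_minus; [exact Hex | apply ex_RInt_const].
Qed.

Lemma RInt_riemann_sum_error (F : R -> E) (h e : R) : 0 <= h -> (forall z, continuous F z) ->
  (forall x y, Rabs (x - y) <= h -> norm (minus (F x) (F y)) <= e) ->
  forall m, norm (minus (RInt F 0 (INR (S m) * h)) (scal h (sum_n (fun j => F (INR j * h)) m)))
    <= INR (S m) * h * e.
Proof.
  intros Hh HF Hmod.
  assert (Hcell : forall a, norm (minus (RInt F a (a + h)) (scal h (F a))) <= h * e).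
  { intros a. apply RInt_rectangle_error; [exact Hh | exact HF |].
    intros x Hx. apply Hmod. rewrite Rabs_pos_eq; lra. }
  induction m as [|m IH].
  - rewrite sum_O. replace (INR 0 * h) with 0 by (simpl; ring).
    replace (INR 1 * h) with (0 + h) by (simpl; ring). rewrite Rplus_0_l at 2. apply Hcell.
  - rewrite sum_Sn, (@scal_distr_l _ (NormedModule.ModuleSpace _ E)).
    replace (INR (S (S m)) * h) with (INR (S m) * h + h) by (rewrite (S_INR (S m)); ring).
    rewrite <- (RInt_Chasles F 0 (INR (S m) * h))
      by (apply ex_RInt_continuous; intros; apply HF).
    rewrite (@minus_plus_plus (NormedModule.AbelianGroup _ E)).
    eapply Rle_trans; [apply norm_triangle |].
    apply Rle_trans with (INR (S m) * h * e + h * e); [| lra].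
    apply Rplus_le_compat; [exact IH | apply Hcell].
Qed.

Lemma RInt_extend_Icc (f : R -> E) (a b x : R) : a <= x <= b ->
  RInt (extend_Icc f a b) a x = RInt f a x.
Proof.
  intros Hx. apply RInt_ext. intros y Hy.
  rewrite Rmin_left, Rmax_right in Hy by lra. apply extend_Icc_id. lra.
Qed.

Lemma filterlim_RInt_upper (f : R -> E) (x : nat -> R) (t : R) : 0 <= t ->
  continuous_on_Icc f 0 t -> is_lim_seq x t -> eventually (fun n => 0 <= x n <= t) ->
  filterlim (fun n => RInt f 0 (x n)) eventually (locally (RInt f 0 t)).
Proof.
  intros Ht Hf Hx Hxt.
  set (F := extend_Icc f 0 t).
  assert (HF : forall z, continuous F z)
    by (intros z; apply unif_continuous_continuous, unif_continuous_extend_Icc; assumption).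
  rewrite <- (RInt_extend_Icc f 0 t t) by lra.
  apply (filterlim_ext_loc (fun n => RInt F 0 (x n))).
  { revert Hxt. apply filter_imp. intros n Hn. apply RInt_extend_Icc, Hn. }
  apply (filterlim_comp _ _ _ x (fun y => RInt F 0 y) _ (locally t)); [exact Hx |].
  apply (continuous_RInt_1 F 0 t). apply filter_forall. intros y.
  apply RInt_correct, ex_RInt_continuous. intros; apply HF.
Qed.

End Integration.

Section SemigroupOnInterval.
Context {E : NormedModule R_AbsRing}.
Variables (Sg : R -> E -> E) (t K : R).
Hypothesis HS : is_C0_semigroup Sg.
Hypothesis HK : 1 <= K.
Hypothesis HSK : forall tau, 0 <= tau <= t -> forall u, norm (Sg tau u) <= K * norm u.

Lemma semigroup_lipschitz (tau : R) (x y : E) : 0 <= tau <= t ->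
  norm (minus (Sg tau x) (Sg tau y)) <= K * norm (minus x y).
Proof.
  intros Htau. destruct HS as [Hlin _].
  apply bounded_linear_lipschitz; [apply Hlin; lra | apply HSK, Htau].
Qed.

Lemma semigroup_increment_le (sigma tau : R) (u : E) : 0 <= sigma <= tau -> tau <= t ->
  norm (minus (Sg tau u) (Sg sigma u)) <= K * norm (minus (Sg (tau - sigma) u) u).
Proof.
  intros Hst Htau. destruct HS as [_ [_ [Hsg _]]].
  replace (Sg tau u) with (Sg sigma (Sg (tau - sigma) u))
    by (rewrite <- Hsg by lra; f_equal; ring).
  apply semigroup_lipschitz. lra.
Qed.

Lemma semigroup_continuous_on_Icc (u : E) : continuous_on_Icc (fun tau => Sg tau u) 0 t.
Proof.
  intros tau0 Htau0 e He. destruct HS as [_ [_ [_ Hright]]].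
  destruct (Hright u (e / K) ltac:(apply Rdiv_lt_0_compat; lra)) as [d [Hd Hdu]].
  exists d. split; [exact Hd |]. intros tau Htau Hclose.
  assert (Hinc : forall sigma rho, 0 <= sigma <= rho -> rho <= t -> rho - sigma < d ->
            norm (minus (Sg rho u) (Sg sigma u)) < e).
  { intros sigma rho Hsr Hrho Hrs.
    eapply Rle_lt_trans; [apply semigroup_increment_le; assumption |].
    replace e with (K * (e / K)) by (field; lra).
    apply Rmult_lt_compat_l; [lra | apply Hdu; lra]. }
  destruct (Rle_or_lt tau0 tau).
  - apply Hinc; [lra | lra | rewrite Rabs_pos_eq in Hclose; lra].
  - rewrite norm_minus_sym. apply Hinc; [lra | lra | rewrite Rabs_left in Hclose; lra].
Qed.

Variable w : R -> E.
Hypothesis Hw : continuous_on_Icc w 0 t.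

Lemma semigroup_integrand_continuous : continuous_on_Icc (fun s => Sg (t - s) (w s)) 0 t.
Proof.
  intros s0 Hs0 e He.
  destruct (Hw s0 Hs0 (e / (2 * K)) ltac:(apply Rdiv_lt_0_compat; lra)) as [d1 [Hd1 Hwd]].
  destruct (semigroup_continuous_on_Icc (w s0) (t - s0) ltac:(lra) (e / 2) ltac:(lra))
    as [d2 [Hd2 HSd]].
  exists (Rmin d1 d2). split; [apply Rmin_pos; assumption |]. intros s Hs Hclose.
  pose proof (Rmin_l d1 d2). pose proof (Rmin_r d1 d2).
  assert (Hfirst : norm (minus (Sg (t - s) (w s)) (Sg (t - s) (w s0))) < e / 2).
  { eapply Rle_lt_trans; [apply semigroup_lipschitz; lra |].
    replace (e / 2) with (K * (e / (2 * K))) by (field; lra).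
    apply Rmult_lt_compat_l; [lra | apply Hwd; [exact Hs | lra]]. }
  assert (Hsecond : norm (minus (Sg (t - s) (w s0)) (Sg (t - s0) (w s0))) < e / 2).
  { apply HSd; [lra |]. replace (t - s - (t - s0)) with (- (s - s0)) by ring.
    rewrite Rabs_Ropp. lra. }
  pose proof (norm_minus_triangle (Sg (t - s) (w s)) (Sg (t - s) (w s0)) (Sg (t - s0) (w s0))).
  lra.
Qed.

Lemma semigroup_uniform_near_identity : forall e, 0 < e -> exists d, 0 < d /\
  forall eta, 0 <= eta < d -> eta <= t ->
    forall x, 0 <= x <= t -> norm (minus (Sg eta (w x)) (w x)) < e.
Proof.
  intros e He.
  destruct (uniform_on_continuous_image (fun r eta => 0 <= eta < r /\ eta <= t)
    Sg (fun _ u => u) w 0 t K Hw ltac:(lra)) with (e := e) as [d [Hd Hunif]].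
  - intros r r' eta Hrr' Heta. lra.
  - intros r eta x y _. pose proof (norm_ge_0 (minus x y)). nra.
  - intros u e' He'. destruct HS as [_ [_ [_ Hright]]].
    destruct (Hright u (e' / 2) ltac:(lra)) as [d [Hd Hdu]].
    exists (Rmin d (e' / (2 * K))).
    split; [apply Rmin_pos; [exact Hd | apply Rdiv_lt_0_compat; lra] |].
    intros eta v [Heta Heta_t] Hv.
    pose proof (Rmin_l d (e' / (2 * K))). pose proof (Rmin_r d (e' / (2 * K))).
    assert (Hlip : norm (minus (Sg eta v) (Sg eta u)) < e' / 2).
    { eapply Rle_lt_trans; [apply semigroup_lipschitz; lra |].
      replace (e' / 2) with (K * (e' / (2 * K))) by (field; lra).
      apply Rmult_lt_compat_l; lra. }
    assert (Hnear : norm (minus (Sg eta u) u) < e' / 2) by (apply Hdu; lra).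
    pose proof (norm_minus_triangle (Sg eta v) (Sg eta u) u). lra.
  - exact He.
  - exists d. split; [exact Hd |]. intros eta Heta Heta_t. apply Hunif. lra.
Qed.

End SemigroupOnInterval.

Definition converges_to_semigroup {E : NormedModule R_AbsRing} {P : Type}
  (d : P -> P -> R) (Rfam : P -> R -> R -> R -> E -> E) (mu0 : P) (Sg : R -> E -> E)
  (Tb : R) : Prop :=
  forall u eps, 0 < eps -> exists delta, 0 < delta /\
    forall lam v nu, 0 < lam < delta -> norm (minus v u) < delta -> d nu mu0 < delta ->
      forall t s, 0 <= s <= t -> t <= Tb -> norm (minus (Rfam nu lam t s v) (Sg (t - s) u)) < eps.

Lemma exp_monotone (x y : R) : x <= y -> exp x <= exp y.
Proof. intros [Hlt | ->]; [left; apply exp_increasing, Hlt | lra]. Qed.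

Lemma converges_to_semigroup_bound {E : NormedModule R_AbsRing} {P : Type}
  (d : P -> P -> R) (Rfam : P -> R -> R -> R -> E -> E) (mu0 : P) (Sg : R -> E -> E)
  (M om t : R) : d mu0 mu0 = 0 -> 1 <= M ->
  (forall mu lam, 0 < lam -> forall tau s, 0 <= s <= tau -> forall x,
     norm (Rfam mu lam tau s x) <= M * exp (om * (tau - s)) * norm x) ->
  converges_to_semigroup d Rfam mu0 Sg t ->
  exists K, 1 <= K /\ forall tau, 0 <= tau <= t -> forall u, norm (Sg tau u) <= K * norm u.
Proof.
  intros Hd0 HM Hexp Hconv. exists (M * exp (Rabs (om * t))). split.
  { pose proof (exp_monotone 0 _ (Rabs_pos (om * t))) as Hexp0.
    rewrite exp_0 in Hexp0. nra. }
  intros tau Htau u. apply Rle_plus_epsilon. intros e He.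
  destruct (Hconv u e He) as [r [Hr Happrox]].
  assert (Hu : norm (minus u u) < r).
  { rewrite minus_eq_zero. apply Rle_lt_trans with 0; [right; apply norm_zero | exact Hr]. }
  specialize (Happrox (r / 2) u mu0 ltac:(lra) Hu ltac:(rewrite Hd0; exact Hr) tau 0
    ltac:(lra) ltac:(lra)).
  specialize (Hexp mu0 (r / 2) ltac:(lra) tau 0 ltac:(lra) u).
  rewrite Rminus_0_r in Happrox, Hexp.
  assert (Hgrowth : M * exp (om * tau) * norm u <= M * exp (Rabs (om * t)) * norm u).
  { apply Rmult_le_compat_r; [apply norm_ge_0 |]. apply Rmult_le_compat_l; [lra |].
    apply exp_monotone. rewrite Rabs_mult, (Rabs_pos_eq t) by lra.
    apply Rle_trans with (Rabs om * tau).
    - apply Rmult_le_compat_r; [lra | apply Rle_abs].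
    - apply Rmult_le_compat_l; [apply Rabs_pos | lra]. }
  pose proof (norm_triangle_inv (Rfam mu0 (r / 2) tau 0 u) (Sg tau u)) as Hinv.
  apply Rabs_le_between in Hinv. lra.
Qed.

Section GridSums.
Context {E : CompleteNormedModule R_AbsRing}.
Variables (t : R) (h : nat -> R) (k : nat -> nat).
Hypothesis Ht : 0 < t.
Hypothesis Hh : forall n, 0 < h n.
Hypothesis Hk : forall n, (1 <= k n)%nat.
Hypothesis Hkinf : is_lim_seq (fun n => INR (k n)) p_infty.
Hypothesis Hend : is_lim_seq (fun n => INR (k n) * h n) t.
Hypothesis Hend_le : eventually (fun n => INR (k n) * h n <= t).

Lemma grid_point_bounds (n j : nat) : (j < k n)%nat -> 0 <= INR j * h n <= INR (k n) * h n.
Proof.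
  intros Hj. pose proof (Hh n). pose proof (pos_INR j).
  assert (INR j <= INR (k n)) by (apply le_INR; lia). split; nra.
Qed.

Lemma grid_size_succ (n : nat) : S (k n - 1) = k n.
Proof. specialize (Hk n). lia. Qed.

Lemma grid_step_vanishes (d : R) : 0 < d -> eventually (fun n => h n < d).
Proof.
  intros Hd. apply is_lim_seq_spec in Hkinf.
  generalize (filter_and (F := eventually) _ _ (Hkinf (t / d)) Hend_le).
  apply filter_imp. intros n [Hkn Hkh].
  assert (Htd : t < INR (k n) * d).
  { apply (Rmult_lt_compat_r d) in Hkn; [| exact Hd].
    unfold Rdiv in Hkn. rewrite Rmult_assoc, Rinv_l, Rmult_1_r in Hkn by lra. exact Hkn. }
  pose proof (Hh n). pose proof (pos_INR (k n)). nra.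
Qed.

Lemma grid_end_approaches (d : R) : 0 < d -> eventually (fun n => t - INR (k n) * h n < d).
Proof.
  intros Hd. apply is_lim_seq_spec in Hend. specialize (Hend (mkposreal d Hd)).
  revert Hend. apply filter_imp. simpl. intros n Hn.
  apply Rabs_lt_between in Hn. lra.
Qed.

Lemma eventually_close_grid_sums (a b : nat -> nat -> E) :
  (forall e, 0 < e -> eventually (fun n =>
     forall j, (j < k n)%nat -> norm (minus (a n j) (b n j)) <= e)) ->
  eventually_close (fun n => scal (h n) (sum_n (a n) (k n - 1)))
                   (fun n => scal (h n) (sum_n (b n) (k n - 1))).
Proof.
  intros Hab eps Heps.
  set (e := eps / (t + 1)).
  assert (He : 0 < e) by (apply Rdiv_lt_0_compat; lra).
  assert (Hte : t * e < eps)
    by (unfold e; apply Rmult_lt_reg_r with (t + 1); field_simplify; nra).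
  generalize (filter_and (F := eventually) _ _ (Hab e He) Hend_le).
  apply filter_imp. intros n [Hn Hkh].
  eapply Rle_lt_trans.
  { apply (norm_scal_sum_n_minus_le (E := E)); [apply Rlt_le, Hh |].
    intros j Hj. apply Hn. specialize (Hk n). lia. }
  rewrite grid_size_succ. nra.
Qed.

Lemma grid_riemann_sums_close_integrals (f : R -> E) : continuous_on_Icc f 0 t ->
  eventually_close (fun n => scal (h n) (sum_n (fun j => f (INR j * h n)) (k n - 1)))
                   (fun n => RInt f 0 (INR (k n) * h n)).
Proof.
  intros Hf eps Heps.
  set (F := extend_Icc f 0 t).
  assert (HF : unif_continuous F) by (apply unif_continuous_extend_Icc; [lra | exact Hf]).
  set (e := eps / (t + 1)).
  assert (He : 0 < e) by (apply Rdiv_lt_0_compat; lra).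
  assert (Hte : t * e < eps)
    by (unfold e; apply Rmult_lt_reg_r with (t + 1); field_simplify; nra).
  destruct (HF e He) as [d [Hd HFd]].
  generalize (filter_and (F := eventually) _ _ (grid_step_vanishes d Hd) Hend_le).
  apply filter_imp. intros n [Hhn Hkh].
  rewrite <- (RInt_extend_Icc f 0 t) by (pose proof (grid_point_bounds n O (Hk n)); lra).
  rewrite (sum_n_ext_loc _ (fun j => F (INR j * h n))).
  2: { intros j Hj. symmetry. apply extend_Icc_id.
       pose proof (grid_point_bounds n j ltac:(specialize (Hk n); lia)). lra. }
  rewrite (norm_minus_sym (E := E)).
  replace (INR (k n) * h n) with (INR (S (k n - 1)) * h n)
    by (rewrite grid_size_succ; reflexivity).
  eapply Rle_lt_trans.
  { apply RInt_riemann_sum_error; [apply Rlt_le, Hh | |].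
    - intros z. exact (unif_continuous_continuous F z HF).
    - intros x y Hxy. apply Rlt_le, HFd. lra. }
  rewrite grid_size_succ. nra.
Qed.

Lemma grid_riemann_sums_converge (f : R -> E) : continuous_on_Icc f 0 t ->
  filterlim (fun n => scal (h n) (sum_n (fun j => f (INR j * h n)) (k n - 1)))
    eventually (locally (RInt f 0 t)).
Proof.
  intros Hf. eapply (filterlim_eventually_close (E := E)).
  { apply grid_riemann_sums_close_integrals, Hf. }
  apply filterlim_RInt_upper; [lra | exact Hf | exact Hend |].
  revert Hend_le. apply filter_imp. intros n Hn.
  pose proof (grid_point_bounds n O (Hk n)). lra.
Qed.

Variables (Sg : R -> E -> E) (K : R) (w : R -> E).
Hypothesis HS : is_C0_semigroup Sg.
Hypothesis HK : 1 <= K.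
Hypothesis HSK : forall tau, 0 <= tau <= t -> forall u, norm (Sg tau u) <= K * norm u.
Hypothesis Hw : continuous_on_Icc w 0 t.

Lemma semigroup_grid_sums_shift :
  eventually_close
    (fun n => scal (h n) (sum_n (fun j =>
       Sg (INR (k n) * h n - INR j * h n) (w (INR j * h n))) (k n - 1)))
    (fun n => scal (h n) (sum_n (fun j => Sg (t - INR j * h n) (w (INR j * h n))) (k n - 1))).
Proof.
  apply eventually_close_grid_sums. intros e He.
  destruct (semigroup_uniform_near_identity Sg t K HS HK HSK w Hw (e / K)
    ltac:(apply Rdiv_lt_0_compat; lra)) as [d [Hd Hnear]].
  generalize (filter_and (F := eventually) _ _ (grid_end_approaches d Hd) Hend_le).
  apply filter_imp. intros n [Hgap Hkh] j Hj.
  pose proof (grid_point_bounds n j Hj) as Hjh.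
  rewrite (norm_minus_sym (E := E)).
  eapply Rle_trans; [apply (semigroup_increment_le Sg t K HS HSK); lra |].
  replace (t - INR j * h n - (INR (k n) * h n - INR j * h n)) with (t - INR (k n) * h n)
    by ring.
  replace e with (K * (e / K)) by (field; lra).
  apply Rmult_le_compat_l; [lra |]. apply Rlt_le, Hnear; lra.
Qed.

Variables (P : Type) (d : P -> P -> R) (Rfam : P -> R -> R -> R -> E -> E).
Variables (lam : nat -> R) (mu : nat -> P) (mu0 : P).
Hypothesis Hconv : converges_to_semigroup d Rfam mu0 Sg t.
Hypothesis Hlam : forall n, 0 < lam n.
Hypothesis Hlam0 : is_lim_seq lam 0.
Hypothesis Hmu : is_lim_seq (fun n => d (mu n) mu0) 0.

Lemma evolution_uniform_on_trajectory : forall e, 0 < e -> exists r, 0 < r /\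
  forall l nu, 0 < l < r -> d nu mu0 < r -> forall tau s, 0 <= s <= tau -> tau <= t ->
    forall x, 0 <= x <= t -> norm (minus (Rfam nu l tau s (w x)) (Sg (tau - s) (w x))) < e.
Proof.
  intros e He.
  destruct (uniform_on_continuous_image (I := (R * P) * (R * R))
    (fun r i => let '((l, nu), (tau, s)) := i in
       (0 < l < r /\ d nu mu0 < r) /\ (0 <= s <= tau /\ tau <= t))
    (fun i => let '((l, nu), (tau, s)) := i in Rfam nu l tau s)
    (fun i => let '((l, nu), (tau, s)) := i in Sg (tau - s))
    w 0 t K Hw ltac:(lra)) with (e := e) as [r [Hr Hunif]].
  - intros r r' [[l nu] [tau s]] Hrr' Hi. lra.
  - intros r [[l nu] [tau s]] x y Hi. apply (semigroup_lipschitz Sg t K HS HSK). lra.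
  - intros u e' He'. destruct (Hconv u e' He') as [r [Hr Hr']].
    exists r. split; [exact Hr |]. intros [[l nu] [tau s]] v Hi Hv. apply Hr'; tauto.
  - exact He.
  - exists r. split; [exact Hr |]. intros l nu Hl Hnu tau s Hs Htau x Hx.
    exact (Hunif ((l, nu), (tau, s)) ltac:(tauto) x Hx).
Qed.

Lemma evolution_grid_sums_close :
  eventually_close
    (fun n => scal (h n) (sum_n (fun j =>
       Rfam (mu n) (lam n) (INR (k n) * h n) (INR j * h n) (w (INR j * h n))) (k n - 1)))
    (fun n => scal (h n) (sum_n (fun j =>
       Sg (INR (k n) * h n - INR j * h n) (w (INR j * h n))) (k n - 1))).
Proof.
  apply eventually_close_grid_sums. intros e He.
  destruct (evolution_uniform_on_trajectory e He) as [r [Hr Hunif]].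
  apply is_lim_seq_spec in Hlam0, Hmu.
  generalize (filter_and (F := eventually) _ _ (Hlam0 (mkposreal r Hr))
             (filter_and (F := eventually) _ _ (Hmu (mkposreal r Hr)) Hend_le)).
  apply filter_imp. simpl. intros n [Hln [Hmun Hkh]] j Hj.
  pose proof (grid_point_bounds n j Hj). pose proof (Hlam n).
  rewrite Rminus_0_r in Hln, Hmun. apply Rabs_lt_between in Hln, Hmun.
  apply Rlt_le, Hunif; lra.
Qed.

End GridSums.

Theorem lemma2p5
  (E : CompleteNormedModule R_AbsRing)
  (P : Type) (d : P -> P -> R) (Hd : is_metric d)
  (Rfam : P -> R -> R -> R -> E -> E)   (* Rfam mu lambda t s = R^{(mu,lambda)}(t,s) *)
  (Shat : P -> R -> E -> E)             (* Shat mu t = \hat S^{(mu)}(t) *)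
  (Hevol : forall mu lam, 0 < lam -> is_evolution_system (Rfam mu lam))
  (H4 : exists (M omega : R), 1 <= M /\
     forall mu lam, 0 < lam -> forall t s, 0 <= s <= t -> forall x : E,
       norm (Rfam mu lam t s x) <= M * exp (omega * (t - s)) * norm x)
  (HC0 : forall mu, is_C0_semigroup (Shat mu))
  (H5 : forall (Tb : R) (mu : P) (u : E) (eps : R), 0 < eps ->
     exists delta, 0 < delta /\
       forall (lam : R) (v : E) (nu : P), 0 < lam < delta ->
         norm (minus v u) < delta -> d nu mu < delta ->
         forall t s, 0 <= s <= t -> t <= Tb ->
           norm (minus (Rfam nu lam t s v) (Shat mu (t - s) u)) < eps)
  (T : nat -> R) (k : nat -> nat) (lam : nat -> R) (mu : nat -> P) (mu0 : P) (t : R)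
  (HT : forall n, 0 < T n) (Hk : forall n, (1 <= k n)%nat) (Hlam : forall n, 0 < lam n)
  (Ht : 0 < t)
  (HTlim : is_lim_seq T p_infty)
  (Hklim : is_lim_seq (fun n => INR (k n)) p_infty)
  (Hlamlim : is_lim_seq lam 0)
  (Hprod : is_lim_seq (fun n => INR (k n) * lam n * T n) t)
  (Hmu : is_lim_seq (fun n => d (mu n) mu0) 0)
  (Hle : exists N, forall n, (N <= n)%nat -> INR (k n) * lam n * T n <= t)
  (w : R -> E) (Hw : continuous_on_Icc w 0 t) :
  filterlim
    (fun n => scal (lam n * T n)
       (sum_n (fun j => Rfam (mu n) (lam n) (INR (k n) * lam n * T n) (INR j * lam n * T n)
                          (w (INR j * lam n * T n)))
              (k n - 1)%nat))
    eventually
    (locally (RInt (fun s => Shat mu0 (t - s) (w s)) 0 t)).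
Proof.
  destruct H4 as [M [om [HM Hgrowth]]].
  assert (Hd0 : d mu0 mu0 = 0) by (apply Hd; reflexivity).
  destruct (converges_to_semigroup_bound d Rfam mu0 (Shat mu0) M om t Hd0 HM Hgrowth (H5 t mu0))
    as [K [HK HSK]].
  set (h n := lam n * T n).
  assert (Hh : forall n, 0 < h n) by (intros n; apply Rmult_lt_0_compat; auto).
  assert (Hassoc : forall n j, INR j * lam n * T n = INR j * h n) by (intros; unfold h; ring).
  apply (is_lim_seq_ext _ (fun n => INR (k n) * h n) t (fun n => Hassoc n (k n))) in Hprod.
  assert (Hend_le : eventually (fun n => INR (k n) * h n <= t)).
  { destruct Hle as [N HN]. exists N. intros n Hn. rewrite <- Hassoc. auto. }
  apply (filterlim_ext (fun n => scal (h n) (sum_n (fun j =>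
    Rfam (mu n) (lam n) (INR (k n) * h n) (INR j * h n) (w (INR j * h n))) (k n - 1)))).
  { intros n. f_equal. apply sum_n_ext. intros j. rewrite !Hassoc. reflexivity. }
  eapply (filterlim_eventually_close (E := E)).
  { eapply eventually_close_trans.
    - exact (evolution_grid_sums_close t h k Ht Hh Hk Hend_le (Shat mu0) K w (HC0 mu0) HK HSK
        Hw P d Rfam lam mu mu0 (H5 t mu0) Hlam Hlamlim Hmu).
    - exact (semigroup_grid_sums_shift t h k Ht Hh Hk Hprod Hend_le (Shat mu0) K w (HC0 mu0)
        HK HSK Hw). }
  apply (grid_riemann_sums_converge t h k Ht Hh Hk Hklim Hprod Hend_le
    (fun s => Shat mu0 (t - s) (w s))).
  exact (semigroup_integrand_continuous (Shat mu0) t K (HC0 mu0) HK HSK w Hw).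
Qed.
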